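(* Every KW-complex is a Hausdorff space.
   Context: A KW-complex is a topological space $X$ built as follows: $X^0$ is a disjoint union of compact Hausdorff spaces; for $n\ge1$, $X^n$ is the pushout in the category of all topological spaces of $X^{n-1}\leftarrow\partial\Delta_n\times Y_n\to\Delta_n\times Y_n$ for some continuous attaching map and some $Y_n$ that is a disjoint union of compact Hausdorff spaces ($\Delta_n$ the topological $n$-simplex, $\partial\Delta_n$ its boundary, the right map the inclusion); and $X=\operatorname{colim}_nX^n$ in topological spaces. *)

From HB Require Import structures.
From mathcomp Require Import all_boot all_order all_algebra.
From mathcomp Require Import all_classical all_reals all_analysis.
Unset Printing Implicit Defensive.
Import Order.TTheory GRing.Theory Num.Theory.
Import numFieldTopology.Exports numFieldNormedType.Exports.
Local Open Scope classical_set_scope.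
Local Open Scope ring_scope.

Definition Rvec (R : realType) (k : nat) : topologicalType := matrix R 1 k.

Definition simplex_set (R : realType) (n : nat) : set (Rvec R n.+1) :=
  [set x : 'M[R]_(1, n.+1) | (forall i, 0 <= x ord0 i) /\ \sum_(i < n.+1) x ord0 i = 1].

Definition Simplex (R : realType) (n : nat) : topologicalType :=
  ((simplex_set R n : Type) : topologicalType).

Definition bd_simplex_set (R : realType) (n : nat) : set (Simplex R n) :=
  [set x : Simplex R n | exists i : 'I_n.+1, (set_val x : 'M[R]_(1, n.+1)) ord0 i = 0].

Definition BdSimplex (R : realType) (n : nat) : topologicalType :=
  ((bd_simplex_set R n : Type) : topologicalType).

Definition bd_incl (R : realType) (n : nat) (Y : topologicalType)
  (p : BdSimplex R n * Y) : Simplex R n * Y := (set_val p.1, p.2).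

Definition homeomorphic (A B : topologicalType) : Prop :=
  exists (f : A -> B) (g : B -> A),
    continuous f /\ continuous g /\ cancel f g /\ cancel g f.

Definition disj_union_cpt_haus (Y : topologicalType) : Prop :=
  exists (I : choiceType) (K : I -> topologicalType),
    (forall i, compact [set: K i] /\ hausdorff_space (K i)) /\
    homeomorphic Y {i : I & K i}.

Definition is_pushout (A B C D : topologicalType)
  (f : A -> C) (g : A -> B) (i : C -> D) (j : B -> D) : Prop :=
  [/\ continuous i, continuous j, i \o f = j \o g &
    forall (Z : topologicalType) (u : C -> Z) (v : B -> Z),
      continuous u -> continuous v -> u \o f = v \o g ->
      exists w : D -> Z,
        [/\ continuous w, w \o i = u, w \o j = v &
          forall w' : D -> Z, continuous w' -> w' \o i = u -> w' \o j = v ->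
            w' = w]].

Arguments is_pushout {A B C D}.

Definition is_seq_colimit (Xs : nat -> topologicalType)
  (incl : forall n, Xs n -> Xs n.+1) (X : topologicalType)
  (inj : forall n, Xs n -> X) : Prop :=
  [/\ forall n, continuous (inj n),
      forall n, inj n.+1 \o incl n = inj n &
    forall (Z : topologicalType) (u : forall n, Xs n -> Z),
      (forall n, continuous (u n)) -> (forall n, u n.+1 \o incl n = u n) ->
      exists w : X -> Z,
        [/\ continuous w, forall n, w \o inj n = u n &
          forall w' : X -> Z, continuous w' -> (forall n, w' \o inj n = u n) ->
            w' = w]].

Arguments is_seq_colimit {Xs}.

(* A KW-complex structure on X.  skel n = X^n;  cells n = Y_(n+1),
   attach n : ∂Δ_(n+1) × Y_(n+1) -> X^n the attaching map,
   charmap n : Δ_(n+1) × Y_(n+1) -> X^(n+1),  incl n : X^n -> X^(n+1). *)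
Record KWcomplex (R : realType) (X : topologicalType) := {
  skel : nat -> topologicalType;
  skel0_dunion : disj_union_cpt_haus (skel 0);
  cells : nat -> topologicalType;
  cells_dunion : forall n, disj_union_cpt_haus (cells n);
  attach : forall n, (BdSimplex R n.+1 * cells n)%type -> skel n;
  attach_cont : forall n, continuous (attach n);
  incl : forall n, skel n -> skel n.+1;
  charmap : forall n, (Simplex R n.+1 * cells n)%type -> skel n.+1;
  skel_pushout : forall n,
    is_pushout (attach n) (bd_incl R n.+1 (cells n)) (incl n) (charmap n);
  inj : forall n, skel n -> X;
  colim : is_seq_colimit incl X inj
}.

(* A continuous real function on a skeleton X^n extends to X^(n+1): pull it
   back along the attaching map to the boundary of the cells, extend it to the
   cells radially from the barycenters (damped by a cutoff vanishing near the
   barycenters), and glue by the pushout property.  Hence every continuous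
   real function on X^n extends to X.  By induction each X^n has its points
   separated by continuous real functions: X^0 because compact Hausdorff spaces
   do (Urysohn); in X^(n+1), points of X^n via extensions, and points inside
   cells via bump functions [depth x * theta(x, y)] that vanish on X^n, where
   [depth] is the least barycentric coordinate.  Two points of X come from a
   common X^n, so extending a separating function from X^n separates them in X,
   and X is Hausdorff. *)

From HB Require Import structures.
From mathcomp Require Import all_boot all_order all_algebra.
From mathcomp Require Import all_classical all_reals all_analysis.
From mathcomp Require Import lra.
Import Order.TTheory GRing.Theory Num.Theory.
Import numFieldTopology.Exports numFieldNormedType.Exports.
Local Open Scope classical_set_scope.
Local Open Scope ring_scope.

Section FunctionallyHausdorff.
Variable R : realType.

Definition functionally_hausdorff (T : topologicalType) : Prop :=
  forall a b : T, a <> b -> exists f : T -> R, continuous f /\ f a <> f b.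

Lemma functionally_hausdorff_hausdorff {T : topologicalType} :
  functionally_hausdorff T -> hausdorff_space T.
Proof.
move=> FT p q pq; apply: contrapT => /FT[f [cf]]; apply; apply: (@Rhausdorff R).
move=> A B /(cf p) Ap /(cf q) Bq.
by have [z [Az Bz]] := pq _ _ Ap Bq; exists (f z).
Qed.

Lemma functionally_hausdorff_inj {T S : topologicalType} {F : T -> S} :
  continuous F -> injective F -> functionally_hausdorff S ->
  functionally_hausdorff T.
Proof.
move=> cF iF FS a b ab.
have /FS[f [cf fab]] : F a <> F b by move/iF.
exists (f \o F); split => // x.
by apply: continuous_comp; [exact: cF|exact: cf].
Qed.

Lemma functionally_hausdorff_normed (V : normedModType R) :
  functionally_hausdorff V.
Proof.
move=> a b ab; exists (fun z => `|z - a|); split.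
  move=> z; apply: (continuous_comp (f := fun z => z - a)).
    by apply: continuousB; [exact: cvg_id|exact: cvg_cst].
  exact: norm_continuous.
by rewrite subrr normr0 => /esym/normr0_eq0/subr0_eq/esym/ab.
Qed.

Lemma functionally_hausdorff_prod {S T : topologicalType} :
  functionally_hausdorff S -> functionally_hausdorff T ->
  functionally_hausdorff (S * T)%type.
Proof.
move=> FS FT [a1 b1] [a2 b2] ne.
have [a12|] := pselect (a1 = a2); last first.
  move=> /FS[f [cf fa]]; exists (f \o fst); split => // p.
  by apply: continuous_comp; [exact: cvg_fst|exact: cf].
have /FT[g [cg gb]] : b1 <> b2 by move=> b12; apply: ne; rewrite a12 b12.
exists (g \o snd); split => // p.
by apply: continuous_comp; [exact: cvg_snd|exact: cg].
Qed.

Lemma continuous_sigT_fiberwise (I : choiceType) (K : I -> topologicalType)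
    (Z : topologicalType) (f : {i : I & K i} -> Z) :
  (forall i, continuous (f \o existT _ i)) -> continuous f.
Proof. by move=> cf [i z] U /(cf i z). Qed.

Lemma functionally_hausdorff_sigT {I : choiceType} {K : I -> topologicalType} :
  (forall i, functionally_hausdorff (K i)) ->
  functionally_hausdorff {i : I & K i}.
Proof.
move=> FK [i a] [j b] ab.
have [eij|nij] := eqVneq i j; last first.
  exists (fun p => (tag p == i)%:R); split.
    apply: continuous_sigT_fiberwise => k.
    by rewrite /comp /=; exact: cst_continuous.
  by rewrite /= eqxx eq_sym (negbTE nij) => /eqP; rewrite oner_eq0.
subst j; have /FK[g [cg gab]] : a <> b by move=> ab'; apply: ab; rewrite ab'.
exists (fun p => g (tagged_as (existT _ i a) p)); split; last first.
  by rewrite !tagged_asE.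
apply: continuous_sigT_fiberwise => k; have [eki|nki] := eqVneq k i.
  subst k; rewrite (_ : _ \o _ = g) //.
  by apply/funext => z /=; rewrite tagged_asE.
rewrite /comp /tagged_as /=; case: eqP => [eki|_]; last exact: cst_continuous.
by case/eqP: nki.
Qed.

Lemma compact_hausdorff_functionally_hausdorff {T : topologicalType} :
  compact [set: T] -> hausdorff_space T -> functionally_hausdorff T.
Proof.
move=> cT hT a b ab.
have closed1 := accessible_closed_set1 (hausdorff_accessible hT).
have disj : [set a] `&` [set b] = set0.
  by apply/seteqP; split=> // z [/= -> ].
have [f [cf fa fb _]] := urysohn_ext_itv (compact_normal hT cT)
  (closed1 a) (closed1 b) disj (@ltr01 R).
exists f; split => //.
have -> : f a = 0 by apply: fa; exists a.
have -> : f b = 1 by apply: fb; exists b.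
by move/eqP; rewrite eq_sym oner_eq0.
Qed.

Lemma disj_union_functionally_hausdorff {T : topologicalType} :
  disj_union_cpt_haus T -> functionally_hausdorff T.
Proof.
move=> [I [K [cptK [F [G [cF [_ [FK _]]]]]]]].
apply: (functionally_hausdorff_inj cF (can_inj FK)).
apply: functionally_hausdorff_sigT => i.
by have [cKi hKi] := cptK i; exact: compact_hausdorff_functionally_hausdorff.
Qed.

End FunctionallyHausdorff.

Lemma continuous_at_into_set_type {T Z : topologicalType} {A : set T}
    (f : Z -> A) z :
  {for z, continuous (set_val \o f)} -> {for z, continuous f}.
Proof.
move=> cf U [_ [[W oW <-]] /= Wfz] /filterS; apply; apply: cf.
exact: open_nbhs_nbhs.
Qed.

Definition indiscrete_bool : topologicalType :=
  initial_topology (fun _ : bool => true).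

Lemma continuous_indiscrete {T : topologicalType} (h : T -> indiscrete_bool) :
  continuous h.
Proof. by apply: continuous_comp_initial; exact: cst_continuous. Qed.

(* Every map into an indiscrete space is continuous, so uniqueness in the
   universal property identifies the indicator of the union of the images
   with the constant [true]. *)
Lemma pushout_cover {A B C D : topologicalType} {f : A -> C} {g : A -> B}
    {i : C -> D} {j : B -> D} :
  is_pushout f g i j -> forall d, (exists c, d = i c) \/ (exists b, d = j b).
Proof.
case=> _ _ _ U d.
pose covered (d : D) : indiscrete_bool :=
  `[< (exists c, d = i c) \/ (exists b, d = j b) >].
pose T (_ : D) : indiscrete_bool := true.
have [w [_ _ _ uniq_w]] := U _ (T \o i) (T \o j)
  (continuous_indiscrete _) (continuous_indiscrete _) erefl.
have : covered = T.
  rewrite [LHS]uniq_w ?[RHS]uniq_w //; try exact: continuous_indiscrete.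
    by apply/funext => c; apply/asboolP; left; exists c.
  by apply/funext => b; apply/asboolP; right; exists b.
by move/(congr1 (@^~ d))/asboolP.
Qed.

Section SeqColimit.
Context {Xs : nat -> topologicalType} {incl : forall n, Xs n -> Xs n.+1}.
Context {X : topologicalType} {inj : forall n, Xs n -> X}.
Hypothesis colimX : is_seq_colimit incl X inj.

Lemma seq_colimit_cover x : exists n a, x = inj n a.
Proof.
case: colimX => _ _ U.
pose covered (x : X) : indiscrete_bool := `[< exists n a, x = inj n a >].
pose T (_ : X) : indiscrete_bool := true.
have [w [_ _ uniq_w]] := U _ (fun n => T \o inj n)
  (fun=> continuous_indiscrete _) (fun=> erefl).
have : covered = T.
  rewrite [LHS]uniq_w ?[RHS]uniq_w //; try exact: continuous_indiscrete.
  by move=> n; apply/funext => a; apply/asboolP; exists n, a.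
by move/(congr1 (@^~ x))/asboolP.
Qed.

Lemma seq_colimit_lift {n} (a : Xs n) {m} : (n <= m)%N ->
  exists a' : Xs m, inj m a' = inj n a.
Proof.
elim: m => [|m IH]; first by rewrite leqn0 => /eqP en; subst n; exists a.
rewrite leq_eqVlt => /predU1P[en|/IH[a' <-]]; first by subst n; exists a.
case: colimX => _ inc_inj _; exists (incl m a').
exact: (congr1 (@^~ a') (inc_inj m)).
Qed.

Lemma seq_colimit_cover2 x y : exists n a b, x = inj n a /\ y = inj n b.
Proof.
have [n [a ->]] := seq_colimit_cover x; have [m [b ->]] := seq_colimit_cover y.
have [a' <-] := seq_colimit_lift a (leq_maxl n m).
have [b' <-] := seq_colimit_lift b (leq_maxr n m).
by exists (maxn n m), a', b'.
Qed.

End SeqColimit.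

Section Extendable.
Variable R : realType.

Definition extendable {A B : topologicalType} (e : A -> B) : Prop :=
  forall g : A -> R, continuous g ->
  exists g' : B -> R, continuous g' /\ g' \o e = g.

Lemma pushout_extendable {A B C D : topologicalType}
    {f : A -> C} {g : A -> B} {i : C -> D} {j : B -> D} :
  is_pushout f g i j -> continuous f -> extendable g -> extendable i.
Proof.
case=> _ _ _ U cf ext_g h ch.
have [h' [ch' h'g]] :=
  ext_g (h \o f) (fun a => continuous_comp (cf a) (ch (f a))).
by have [w [cw wi _ _]] := U R h h' ch ch' (esym h'g); exists w.
Qed.

(* By induction on [N] for all sequences at once: for [N.+1], apply the
   induction hypothesis to the sequence shifted by one and restrict to level 0. *)
Lemma extendable_compatible_family {Xs : nat -> topologicalType}
    {incl : forall n, Xs n -> Xs n.+1} :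
  (forall n, continuous (incl n)) -> (forall n, extendable (incl n)) ->
  forall {N} (g : Xs N -> R), continuous g ->
  exists G : forall n, Xs n -> R,
    [/\ forall n, continuous (G n), forall n, G n.+1 \o incl n = G n & G N = g].
Proof.
move=> + + N; elim: N Xs incl => [|N IH] Xs incl cincl ext g cg.
  have E n : {E : (Xs n -> R) -> Xs n.+1 -> R &
      forall h, continuous h -> continuous (E h) /\ E h \o incl n = h}.
    apply: (choice (P := fun h h' =>
      continuous h -> continuous h' /\ h' \o incl n = h)) => h.
    have [ch|nch] := pselect (continuous h); last by exists (fun=> 0).
    by have [h' ext_h] := ext n h ch; exists h'.
  pose G := fix G n : Xs n -> R :=
    if n is n'.+1 then projT1 (E n') (G n') else g.
  have cG n : continuous (G n).
    by elim: n => [|n IHn] //=; have [] := projT2 (E n) _ IHn.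
  by exists G; split => // n; have [] := projT2 (E n) _ (cG n).
have [G [cG incG GN]] := IH (fun n => Xs n.+1) (fun n => incl n.+1)
  (fun n => cincl n.+1) (fun n => ext n.+1) g cg.
exists (fun n => if n is n'.+1 return Xs n -> R then G n' else G 0%N \o incl 0%N).
split => // -[|n] // x.
by apply: continuous_comp; [exact: cincl|exact: cG].
Qed.

Lemma seq_colimit_functionally_hausdorff {Xs : nat -> topologicalType}
    {incl : forall n, Xs n -> Xs n.+1} {X : topologicalType}
    {inj : forall n, Xs n -> X} :
  is_seq_colimit incl X inj ->
  (forall n, continuous (incl n)) -> (forall n, extendable (incl n)) ->
  (forall n, functionally_hausdorff R (Xs n)) -> functionally_hausdorff R X.
Proof.
move=> colimX cincl ext FXs x y.
have [n [a [b [-> ->]]]] := seq_colimit_cover2 colimX x y; move=> xy.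
have /FXs[g [cg gab]] : a <> b by move=> ab; apply: xy; rewrite ab.
have [G [cG incG Gn]] := extendable_compatible_family cincl ext _ cg.
have [_ _ /(_ R G cG incG)[f [cf fG _]]] := colimX.
by exists f; split => //; rewrite -Gn -fG in gab.
Qed.

End Extendable.

Section MinCoord.
Context {R : realType} {k : nat}.
Local Notation V := 'M[R]_(1, k.+1).

Definition min_coord (x : V) : R := \big[Num.min/x ord0 ord0]_i x ord0 i.

Lemma min_coord_le x i : min_coord x <= x ord0 i.
Proof. exact: bigmin_le. Qed.

Lemma min_coord_attained x : exists i, min_coord x = x ord0 i.
Proof.
rewrite /min_coord; elim/big_ind: _ => [|a b [i ->] [j ->]|i _]; try by eexists.
by case: (leP (x ord0 i) (x ord0 j)) => _; eexists.
Qed.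

Lemma continuous_min_coord : continuous (min_coord : V -> R).
Proof.
suff: forall r,
    continuous (fun x : V => \big[Num.min/x ord0 ord0]_(i <- r) x ord0 i).
  exact.
elim=> [|i r IH] x.
  under eq_fun do rewrite big_nil; exact: coord_continuous.
under eq_fun do rewrite big_cons.
by apply: continuous_min; [exact: coord_continuous|exact: IH].
Qed.

End MinCoord.

Section SimplexDepth.
Context {R : realType} {m : nat}.
Local Notation V := 'M[R]_(1, m.+1).

Definition depth (x : Simplex R m) : R := min_coord (set_val x : V).

Lemma continuous_depth : continuous depth.
Proof.
move=> x; apply: continuous_comp; last exact: continuous_min_coord.
exact: initial_continuous.
Qed.

Lemma depth_ge0 x : 0 <= depth x.
Proof.
rewrite /depth; have [i ->] := min_coord_attained (set_val x : V).
by have [+ _] := set_valP x; apply.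
Qed.

Lemma depth_bd (b : BdSimplex R m) : depth (set_val b) = 0.
Proof.
have [i bi0] := set_valP b.
by apply/eqP; rewrite eq_le depth_ge0 andbT -bi0; exact: min_coord_le.
Qed.

Lemma depth_gt0 x : ~ bd_simplex_set R m x -> 0 < depth x.
Proof.
move=> xNbd; rewrite lt_def depth_ge0 andbT; apply/eqP => x0.
have [i xi] := min_coord_attained (set_val x : V).
by apply: xNbd; exists i; rewrite -xi.
Qed.

End SimplexDepth.

Lemma functionally_hausdorff_simplex (R : realType) m :
  functionally_hausdorff R (Simplex R m).
Proof.
apply: (@functionally_hausdorff_inj R _ _ set_val).
- exact: initial_continuous.
- exact: val_inj.
- exact: functionally_hausdorff_normed.
Qed.

Section RadialProjection.
Context {R : realType} {m : nat}.
Local Notation V := 'M[R]_(1, m.+1).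
Local Notation N := (m.+1)%:R.

(* Central projection from the barycenter [const_mx N^-1] onto the boundary. *)
Definition radial (x : V) : V :=
  (1 - N * min_coord x)^-1 *: (x - min_coord x *: const_mx 1).

Lemma radial_coord x i :
  radial x ord0 i = (1 - N * min_coord x)^-1 * (x ord0 i - min_coord x).
Proof. by rewrite !mxE mulr1. Qed.

Lemma radial_simplex {x : Simplex R m} :
  N * depth x < 1 -> simplex_set R m (radial (set_val x)).
Proof.
rewrite -subr_gt0 => pos; split => [i|].
  rewrite radial_coord; apply: mulr_ge0; first by rewrite invr_ge0 ltW.
  by rewrite subr_ge0 min_coord_le.
have [_ sum1] := set_valP x.
under eq_bigr do rewrite radial_coord.
rewrite -mulr_sumr sumrB sum1 sumr_const card_ord -(mulr_natl (min_coord _)).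
by rewrite mulVf ?gt_eqF.
Qed.

Lemma radial_bd x : exists i, radial x ord0 i = 0.
Proof.
have [i xi] := min_coord_attained x.
by exists i; rewrite radial_coord -xi subrr mulr0.
Qed.

Lemma radial_id x : min_coord x = 0 -> radial x = x.
Proof.
by move=> x0; rewrite /radial x0 mulr0 subr0 invr1 scale0r subr0 scale1r.
Qed.

Lemma continuous_radial x : N * min_coord x != 1 -> {for x, continuous radial}.
Proof.
rewrite eq_sym -subr_eq0 => nz.
have cmin : {for x, continuous (min_coord : V -> R)} := continuous_min_coord x.
have cNmin : {for x, continuous (fun y : V => 1 - N * min_coord y)}.
  apply: (@continuousB R R^o _ (fun=> 1) (fun y => N * min_coord y)).
    exact: cst_continuous.
  by apply: (continuousM (s := fun=> N)) => //; exact: cst_continuous.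
apply: (continuousZ (s := fun y => (1 - N * min_coord y)^-1)).
  exact: continuousV.
apply: (continuousB (f := id) (g := fun y => min_coord y *: const_mx 1)).
  exact: cvg_id.
by apply: (continuousZ (f := fun=> const_mx 1)) => //; exact: cst_continuous.
Qed.

End RadialProjection.

Section RadialExtension.
Context {R : realType} {m : nat}.
Variable b0 : BdSimplex R m.
Local Notation N := (m.+1)%:R.

Definition retraction (x : Simplex R m) : BdSimplex R m :=
  insubd b0 (insubd x (radial (set_val x))).

Lemma retraction_val x :
  N * depth x < 1 -> set_val (set_val (retraction x)) = radial (set_val x).
Proof.
move=> x_near_bd.
have rad_x : set_val (insubd x (radial (set_val x)) : Simplex R m) =
    radial (set_val x).
  by rewrite set_valE insubdK //; exact/mem_set/radial_simplex.
rewrite /retraction -[RHS]rad_x; congr set_val; rewrite set_valE insubdK //.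
apply: mem_set.
by have [i rad_i] := radial_bd (set_val x); exists i; rewrite rad_x.
Qed.

Lemma retraction_bd (b : BdSimplex R m) : retraction (set_val b) = b.
Proof.
rewrite /retraction radial_id; last exact: depth_bd.
have -> : insubd (set_val b) (set_val (set_val b)) = set_val b :> Simplex R m.
  by rewrite set_valE valKd.
by rewrite set_valE valKd.
Qed.

Lemma continuous_scaled_depth : continuous (fun x : Simplex R m => N * depth x).
Proof.
move=> x; apply: (continuousM (s := fun=> N)); first exact: cst_continuous.
exact: continuous_depth.
Qed.

Lemma continuous_retraction x :
  N * depth x < 1 -> {for x, continuous retraction}.
Proof.
move=> x_near_bd; do 2 apply: continuous_at_into_set_type.
have near_bd : \forall z \near x,
    radial (set_val z) = set_val (set_val (retraction z)).
  apply: filterS (cvgr_lt _ (continuous_scaled_depth x) _ x_near_bd).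
  by move=> z /retraction_val ->.
apply: cvg_trans (near_eq_cvg near_bd) _; rewrite /comp retraction_val //.
apply: continuous_comp; first exact: initial_continuous.
by apply: continuous_radial; rewrite lt_eqF.
Qed.

(* [N * depth x <= 1], with equality only at the barycenter, where the
   retraction breaks down; the cutoff vanishes on a neighbourhood of it. *)
Definition cutoff (x : Simplex R m) : R := Num.max 0 (1 - 2 * (N * depth x)).

Lemma continuous_cutoff : continuous cutoff.
Proof.
move=> x.
apply: (@continuous_max R _ (fun=> 0) (fun x => 1 - 2 * (N * depth x))).
  exact: cst_continuous.
apply: (@continuousB R R^o _ (fun=> 1) (fun x => 2 * (N * depth x))).
  exact: cst_continuous.
apply: (continuousM (s := fun=> 2)); first exact: cst_continuous.
exact: continuous_scaled_depth.
Qed.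

Lemma cutoff_eq0 x : 2^-1 < N * depth x -> cutoff x = 0.
Proof. by move=> half_lt; rewrite /cutoff max_l //; lra. Qed.

Section Extension.
Context {Y : topologicalType}.
Variable h : (BdSimplex R m * Y)%type -> R.
Hypothesis ch : continuous h.

Definition radial_extension (p : (Simplex R m * Y)%type) : R :=
  cutoff p.1 * h (retraction p.1, p.2).

Lemma radial_extension_bd b y : radial_extension (set_val b, y) = h (b, y).
Proof.
rewrite /radial_extension /cutoff /= depth_bd retraction_bd !mulr0 subr0.
by rewrite max_r ?ler01 ?mul1r.
Qed.

Lemma continuous_radial_extension : continuous radial_extension.
Proof.
move=> [x y]; have [x_near_bd|x_far] := ltP (N * depth x) 1.
  apply: (continuousM (s := fun p => cutoff p.1)).
    by apply: continuous_comp; [exact: cvg_fst|exact: continuous_cutoff].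
  apply: (continuous_comp (f := fun p => (retraction p.1, p.2))); last exact: ch.
  have cr : {for (x, y), continuous
      (fun p : (Simplex R m * Y)%type => retraction p.1)}.
    by apply: continuous_comp; [exact: cvg_fst|exact: continuous_retraction].
  exact: cvg_pair cr cvg_snd.
have half_lt : 2^-1 < N * depth x by lra.
have cNdepth : {for (x, y), continuous
    (fun p : (Simplex R m * Y)%type => N * depth p.1)}.
  apply: (@continuous_comp _ _ _ fst (fun z => N * depth z)).
    exact: cvg_fst.
  exact: continuous_scaled_depth.
have near0 : \forall p \near (x, y), 0 = radial_extension p.
  apply: filterS (cvgr_gt _ cNdepth _ half_lt) => p /cutoff_eq0.
  by rewrite /radial_extension => ->; rewrite mul0r.
apply: cvg_trans (near_eq_cvg near0) _.
by rewrite /radial_extension cutoff_eq0 // mul0r; exact: cvg_cst.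
Qed.

End Extension.
End RadialExtension.

Lemma bd_simplex_inhabited (R : realType) n : inhabited (BdSimplex R n.+1).
Proof.
pose v : 'M[R]_(1, n.+2) := delta_mx 0 0.
have v_simplex : simplex_set R n.+1 v.
  split => [i|]; first by rewrite mxE; case: (_ && _).
  rewrite (bigD1 ord0) //= big1 ?addr0; first by rewrite mxE !eqxx.
  by move=> i i0; rewrite mxE (negbTE i0) andbF.
pose s : Simplex R n.+1 := exist _ v (mem_set v_simplex).
have s_bd : bd_simplex_set R n.+1 s.
  by exists ord_max; rewrite set_valE /= mxE andbF.
by constructor; exists s; exact: mem_set.
Qed.

Lemma bd_incl_extendable (R : realType) n (Y : topologicalType) :
  extendable R (bd_incl R n.+1 Y).
Proof.
case: (bd_simplex_inhabited R n) => b0 h ch.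
exists (radial_extension b0 h); split; first exact: continuous_radial_extension.
by apply/funext => -[b y]; exact: radial_extension_bd.
Qed.

Section CellAttachment.
Context {R : realType} {m : nat} {Y C D : topologicalType}.
Context {att : (BdSimplex R m * Y)%type -> C} {i : C -> D}
  {j : (Simplex R m * Y)%type -> D}.
Hypothesis push : is_pushout att (bd_incl R m Y) i j.

Lemma pushout_cover_interior d :
  (exists c, d = i c) \/ exists x y, d = j (x, y) /\ 0 < depth x.
Proof.
case: (pushout_cover push d) => [|[[x y] ->]]; first by left.
have [x_bd|x_in] := pselect (bd_simplex_set R m x); last first.
  by right; exists x, y; split => //; exact: depth_gt0.
left; exists (att (exist _ x (mem_set x_bd), y)).
by case: push => _ _ /(congr1 (@^~ (exist _ x (mem_set x_bd), y))).
Qed.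

Lemma pushout_bump {th : (Simplex R m * Y)%type -> R} : continuous th ->
  exists w : D -> R, [/\ continuous w, forall c, w (i c) = 0 &
    forall p, w (j p) = depth p.1 * th p].
Proof.
move=> cth; case: push => _ _ _ U.
have cdth : continuous (fun p : (Simplex R m * Y)%type => depth p.1 * th p).
  move=> p; apply: (continuousM (s := fun p => depth p.1)); last exact: cth.
  by apply: continuous_comp; [exact: cvg_fst|exact: continuous_depth].
have [|w [cw wi wj _]] := U R (fun=> 0) _ (@cst_continuous _ _ (0 : R)) cdth.
  by apply/funext => -[b y]; rewrite /= depth_bd mul0r.
exists w; split => // [c|p]; first exact: (congr1 (@^~ c) wi).
exact: (congr1 (@^~ p) wj).
Qed.

Lemma pushout_functionally_hausdorff :
  functionally_hausdorff R C -> functionally_hausdorff R Y -> extendable R i ->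
  functionally_hausdorff R D.
Proof.
move=> FC FY ext_i.
have FSY := functionally_hausdorff_prod R (functionally_hausdorff_simplex R m) FY.
have [w1 [cw1 w1i w1j]] := pushout_bump (@cst_continuous _ _ (1 : R)).
have sep_ij c x y : 0 < depth x -> w1 (i c) <> w1 (j (x, y)).
  by rewrite w1i w1j mulr1 => /gt_eqF/eqP/nesym.
move=> a b.
case: (pushout_cover_interior a) => [[c1 ->]|[x1 [y1 [-> x1_in]]]];
case: (pushout_cover_interior b) => [[c2 ->]|[x2 [y2 [-> x2_in]]]] ab.
- have /FC[g [cg gc]] : c1 <> c2 by move=> c12; apply: ab; rewrite c12.
  have [g' [cg' g'i]] := ext_i g cg.
  by exists g'; split => //; rewrite -g'i in gc.
- by exists w1; split => //; exact: sep_ij.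
- by exists w1; split => //; apply/nesym/sep_ij.
have /FSY[g [cg gp]] : (x1, y1) <> (x2, y2).
  by move=> p12; apply: ab; rewrite p12.
have [w2 [cw2 _ w2j]] := pushout_bump cg.
have [d12|d12] := eqVneq (depth x1) (depth x2).
  exists w2; split => //; rewrite !w2j /= d12.
  by move/(mulfI (lt0r_neq0 x2_in)).
by exists w1; split => //; rewrite !w1j !mulr1; exact/eqP.
Qed.

End CellAttachment.

Theorem lemma2p19 (R : realType) (X : topologicalType) (K : KWcomplex R X) :
  hausdorff_space X.
Proof.
have ext_incl n := pushout_extendable R (skel_pushout R X K n)
  (attach_cont R X K n) (bd_incl_extendable R n (cells R X K n)).
have FH_skel n : functionally_hausdorff R (skel R X K n).
  elim: n => [|n IH].
    exact: disj_union_functionally_hausdorff (skel0_dunion R X K).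
  apply: (pushout_functionally_hausdorff (skel_pushout R X K n) IH).
    exact: disj_union_functionally_hausdorff (cells_dunion R X K n).
  exact: ext_incl.
apply: (functionally_hausdorff_hausdorff R).
apply: (seq_colimit_functionally_hausdorff R (colim R X K) _ ext_incl FH_skel).
by move=> n; case: (skel_pushout R X K n).
Qed.
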